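(* For all positive integers $N$, there exists an $N\times N$ real matrix $Q$ with first row $q_1$ satisfying $\|q_1\|_\infty=1$ and $\log_2(\gamma_2(Q))=\Theta(N)$, such that, for any online factorization algorithm for $Q$ in the row arrival model, there exists a time step $t$ for which the factorization value achieved by the algorithm by step $t$ (that is, $\max_{s\le t}\|\ell_s\|_2$) is at least $\sqrt{\frac12\log_2(\gamma_2(Q))}\cdot\gamma_2(Q_t)$, where $Q_t$ is the matrix of the first $t$ rows of $Q$.
   Context: For a matrix, $\|R\|_{1\to2}$ is the maximum $\ell_2$ norm of a column, $\|L\|_{2\to\infty}$ the maximum $\ell_2$ norm of a row, and $\gamma_2(A)=\min\{\|L\|_{2\to\infty}\|R\|_{1\to2}:LR=A\}$. Row arrival model: rows $q_1,q_2,\ldots\in\mathbb{R}^N$ arrive one at a time. The algorithm chooses an initial (possibly empty) matrix $R_0$ with $N$ columns; at step $t$, after receiving $q_t$, it forms $R_t$ by appending rows to $R_{t-1}$ and outputs a row vector $\ell_t$ with $\ell_tR_t=q_t$, where $\|R_t\|_{1\to2}\le1$ at every step. *)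

From HB Require Import structures.
From mathcomp Require Import all_boot all_order all_algebra.
From mathcomp Require Import all_classical all_reals all_analysis.
Set Implicit Arguments. Unset Strict Implicit. Unset Printing Implicit Defensive.
Import Order.TTheory GRing.Theory Num.Theory.
Local Open Scope ring_scope.
Local Open Scope classical_set_scope.

Definition norm_2_inf (R : realType) (m k : nat) (L : 'M[R]_(m, k)) : R :=
  \big[Num.max/0]_(i < m) Num.sqrt (\sum_(j < k) L i j ^+ 2).

Definition norm_1_2 (R : realType) (k n : nat) (M : 'M[R]_(k, n)) : R :=
  \big[Num.max/0]_(j < n) Num.sqrt (\sum_(i < k) M i j ^+ 2).

(* gamma_2(A) = min { ||L||_{2->oo} ||M||_{1->2} : L M = A } (inner dim arbitrary);
   written as an infimum (it is attained). *)
Definition gamma2 (R : realType) (m n : nat) (A : 'M[R]_(m, n)) : R :=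
  inf [set x : R | exists (k : nat) (L : 'M[R]_(m, k)) (M : 'M[R]_(k, n)),
                     L *m M = A /\ x = norm_2_inf L * norm_1_2 M].

Definition log2 (R : realType) (x : R) : R := ln x / ln 2.

Definition norm_inf_row (R : realType) (n : nat) (v : 'rV[R]_n) : R :=
  \big[Num.max/0]_(j < n) `|v ord0 j|.

Definition norm2_seq (R : realType) (l : seq R) : R :=
  Num.sqrt (\sum_(x <- l) x ^+ 2).

(* A matrix given as the (finite) sequence of its rows: l * Rs and ||Rs||_{1->2} *)
Definition comb_rows (R : realType) (n : nat) (l : seq R) (Rs : seq 'rV[R]_n)
  : 'rV[R]_n := \sum_(i < size Rs) l`_i *: Rs`_i.

Definition colnorm_rows (R : realType) (n : nat) (Rs : seq 'rV[R]_n) : R :=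
  \big[Num.max/0]_(j < n) Num.sqrt (\sum_(r <- Rs) r ord0 j ^+ 2).

Definition prefix_rows (R : realType) (m n : nat) (Q : 'M[R]_(m.+1, n)) (t : nat)
  : 'M[R]_(t, n) := \matrix_(i < t, j < n) Q (inord i) j.

Definition history (R : realType) (m n : nat) (Q : 'M[R]_(m.+1, n)) (t : nat)
  : seq 'rV[R]_n := [seq row (inord i) Q | i <- iota 0 t].

(* A deterministic online factorization algorithm in the row arrival model
   on R^n: an initial (possibly empty) matrix R_0 (list of rows), and a step
   function which, having received q_1..q_t (its whole history), outputs the
   rows to append to R_{t-1} and the coefficient row l_t. *)
Record online_alg (R : realType) (n : nat) := OnlineAlg {
  alg_init : seq 'rV[R]_n;
  alg_step : seq 'rV[R]_n -> seq 'rV[R]_n * seq R }.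

Section Run.
Variables (R : realType) (m n : nat) (Q : 'M[R]_(m.+1, n)) (A : online_alg R n).

Definition alg_R (t : nat) : seq 'rV[R]_n :=
  alg_init A ++ flatten [seq (alg_step A (history Q s)).1 | s <- iota 1 t].

Definition alg_l (t : nat) : seq R := (alg_step A (history Q t)).2.

Definition valid_for : Prop :=
  (forall t, (t <= m.+1)%N -> colnorm_rows (alg_R t) <= 1) /\
  (forall t, (1 <= t <= m.+1)%N ->
     size (alg_l t) = size (alg_R t) /\
     comb_rows (alg_l t) (alg_R t) = row (inord t.-1) Q).

Definition value_by (t : nat) : R :=
  \big[Num.max/0]_(s <- iota 1 t) norm2_seq (alg_l s).
End Run.

From HB Require Import structures.
From mathcomp Require Import all_boot all_order all_algebra.
From mathcomp Require Import all_classical all_reals all_analysis.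
From mathcomp Require Import ring lra zify.
Import Order.TTheory GRing.Theory Num.Theory.
Local Open Scope ring_scope.

Set Implicit Arguments.
Unset Strict Implicit.
Unset Printing Implicit Defensive.

(* Q has rows 2^i h_i (i < K), where h_0, ..., h_(K-1) are the rows of the
   Sylvester-Hadamard matrix of order K, the largest power of two at most N,
   padded with zeros.  Its entry 2^(K-1) and its column norms, at most
   ((4^K - 1)/3)^(1/2), squeeze gamma_2(Q) between 2^(K-1) and 2^K, so
   log2 gamma_2(Q) is within 1 of K > N/2; likewise
   gamma_2(Q_t)^2 <= (4^t - 1)/3 for t <= K.
   Against an online algorithm, test row q_(s+1) with h_s: since
   <q_(s+1), h_s> = 2^s K, Cauchy-Schwarz gives
   2^s K <= |l_(s+1)| (sum_(r in R) <r, h_s>^2)^(1/2), R the final factor.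
   The h_s are orthogonal, so these energies add up to K times the squared
   norms of the first K columns of R, i.e. to at most K^2.  Some s thus has
   energy at most K, and then
   |l_(s+1)|^2 >= 4^s K >= (log2 gamma_2(Q) / 2) gamma_2(Q_(s+1))^2. *)

Lemma sum_nat_double (V : nmodType) (f : nat -> V) m :
  \sum_(0 <= i < m.*2) f i = \sum_(0 <= i < m) (f i.*2 + f i.*2.+1).
Proof.
elim: m => [|m IH]; first by rewrite !big_geq.
by rewrite doubleS !big_nat_recr //= IH addrA.
Qed.

Section Sylvester.
Variable R : comNzRingType.

Fixpoint sylvester (p i j : nat) : R :=
  if p is p'.+1 then (-1) ^+ (odd i && odd j) * sylvester p' i./2 j./2 else 1.

Lemma sylvester_sqr p i j : sylvester p i j ^+ 2 = 1.
Proof. by elim: p i j => [|p IH] i j /=; rewrite ?expr1n // exprMn sqrr_sign IH mulr1. Qed.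

Lemma sylvester0l p j : sylvester p 0 j = 1.
Proof. by elim: p j => [|p IH] j //=; rewrite IH expr0 mulr1. Qed.

Lemma sylvester0r p i : sylvester p i 0 = 1.
Proof. by elim: p i => [|p IH] i //=; rewrite IH andbF expr0 mulr1. Qed.

Lemma sylvester_orthogonal p j j' : (j < 2 ^ p)%N -> (j' < 2 ^ p)%N ->
  \sum_(0 <= i < 2 ^ p) sylvester p i j * sylvester p i j'
    = if j == j' then (2 ^ p)%:R else 0.
Proof.
elim: p j j' => [|p IH] j j'.
  by rewrite !ltnS !leqn0 => /eqP -> /eqP ->; rewrite big_nat1 mulr1.
rewrite expnS mul2n -!ltn_half_double => lt_j lt_j'.
have pair_sum i :
    sylvester p.+1 i.*2 j * sylvester p.+1 i.*2 j'
      + sylvester p.+1 i.*2.+1 j * sylvester p.+1 i.*2.+1 j'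
    = (1 + (-1) ^+ (odd j (+) odd j')) * (sylvester p i j./2 * sylvester p i j'./2).
  by rewrite /= odd_double uphalf_double doubleK /= signr_addb expr0; ring.
rewrite sum_nat_double (eq_bigr _ (fun i _ => pair_sum i)) -mulr_sumr IH //.
have [<-|neq_jj'] := eqVneq j j'; first by rewrite !eqxx addbb -addnn natrD; ring.
have [eq_half|] := eqVneq j./2 j'./2; last by rewrite mulr0.
have : odd j != odd j'.
  apply: contraNneq neq_jj' => eq_odd.
  by rewrite -[j]odd_double_half -[j']odd_double_half eq_odd eq_half.
by case: (odd j); case: (odd j') => // _; rewrite /= expr1 subrr mul0r.
Qed.

End Sylvester.

Section CauchySchwarz.
Variable R : rcfType.

Lemma lagrange_identity (I : Type) (r : seq I) (a b : I -> R) :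
  \sum_(i <- r) \sum_(j <- r) (a i * b j - a j * b i) ^+ 2
    = ((\sum_(i <- r) a i ^+ 2) * (\sum_(i <- r) b i ^+ 2)
       - (\sum_(i <- r) a i * b i) ^+ 2) *+ 2.
Proof.
have expand i j : (a i * b j - a j * b i) ^+ 2
    = a i ^+ 2 * b j ^+ 2 + a j ^+ 2 * b i ^+ 2 - (a i * b i) * (a j * b j) *+ 2.
  by ring.
rewrite (eq_bigr _ (fun i _ => eq_bigr _ (fun j _ => expand i j))).
under eq_bigr do rewrite sumrB big_split sumrMnl.
rewrite sumrB big_split sumrMnl (exchange_big _ _ _ _ _ (fun i j => a j ^+ 2 * b i ^+ 2)).
by rewrite expr2 !big_distrlr /= mulrnBl mulr2n.
Qed.

Lemma sqr_sum_mul_le (I : Type) (r : seq I) (a b : I -> R) :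
  (\sum_(i <- r) a i * b i) ^+ 2 <= (\sum_(i <- r) a i ^+ 2) * (\sum_(i <- r) b i ^+ 2).
Proof.
rewrite -subr_ge0 -(pmulrn_lge0 _ (ltn0Sn 1)) -lagrange_identity.
by apply: sumr_ge0 => i _; apply: sumr_ge0 => j _; exact: sqr_ge0.
Qed.

Lemma normr_sum_mul_le (I : Type) (r : seq I) (a b : I -> R) :
  `|\sum_(i <- r) a i * b i|
    <= Num.sqrt (\sum_(i <- r) a i ^+ 2) * Num.sqrt (\sum_(i <- r) b i ^+ 2).
Proof.
rewrite -sqrtrM; last by apply: sumr_ge0 => i _; exact: sqr_ge0.
by rewrite -sqrtr_sqr ler_wsqrtr // sqr_sum_mul_le.
Qed.

End CauchySchwarz.

Section Gamma2.
Variable R : realType.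

Lemma norm_2_inf_ge0 m k (L : 'M[R]_(m, k)) : 0 <= norm_2_inf L.
Proof. exact: bigmax_ge_id. Qed.

Lemma norm_1_2_ge0 k n (M : 'M[R]_(k, n)) : 0 <= norm_1_2 M.
Proof. exact: bigmax_ge_id. Qed.

Lemma row_norm_le_norm_2_inf m k (L : 'M[R]_(m, k)) i :
  Num.sqrt (\sum_j L i j ^+ 2) <= norm_2_inf L.
Proof. exact: (le_bigmax _ (fun i => Num.sqrt (\sum_j L i j ^+ 2))). Qed.

Lemma col_norm_le_norm_1_2 k n (M : 'M[R]_(k, n)) j :
  Num.sqrt (\sum_i M i j ^+ 2) <= norm_1_2 M.
Proof. exact: (le_bigmax _ (fun j => Num.sqrt (\sum_i M i j ^+ 2))). Qed.

Lemma norm_1_2_le k n (M : 'M[R]_(k, n)) c :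
  (forall j, \sum_i M i j ^+ 2 <= c) -> norm_1_2 M <= Num.sqrt c.
Proof. by move=> le_c; apply: bigmax_le => [|j _]; [exact: sqrtr_ge0|exact: ler_wsqrtr]. Qed.

Lemma norm_2_inf1 n : norm_2_inf (1%:M : 'M[R]_n) <= 1.
Proof.
apply: bigmax_le => // i _; rewrite (bigD1 i) //= big1 => [|j /negbTE neq_ji].
  by rewrite mxE eqxx addr0 expr1n sqrtr1.
by rewrite mxE eq_sym neq_ji expr0n.
Qed.

Lemma normr_mulmx_le m k n (L : 'M[R]_(m, k)) (M : 'M[R]_(k, n)) i j :
  `|(L *m M) i j| <= norm_2_inf L * norm_1_2 M.
Proof.
rewrite mxE; apply: le_trans (normr_sum_mul_le _ _ _) _.
by apply: ler_pM; rewrite ?sqrtr_ge0 ?row_norm_le_norm_2_inf ?col_norm_le_norm_1_2.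
Qed.

Lemma gamma2_le_factor m k n (L : 'M[R]_(m, k)) (M : 'M[R]_(k, n)) :
  gamma2 (L *m M) <= norm_2_inf L * norm_1_2 M.
Proof.
apply: ge_inf; last by exists k, L, M.
by exists 0 => _ [k' [L' [M' [_ ->]]]]; rewrite mulr_ge0 ?norm_2_inf_ge0 ?norm_1_2_ge0.
Qed.

Lemma gamma2_le_norm_1_2 m n (A : 'M[R]_(m, n)) : gamma2 A <= norm_1_2 A.
Proof.
have := gamma2_le_factor 1%:M A; rewrite mul1mx => /le_trans; apply.
by rewrite ler_piMl ?norm_1_2_ge0 ?norm_2_inf1.
Qed.

Lemma le_gamma2 m n (A : 'M[R]_(m, n)) x :
  (forall k (L : 'M[R]_(m, k)) (M : 'M[R]_(k, n)),
     L *m M = A -> x <= norm_2_inf L * norm_1_2 M) ->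
  x <= gamma2 A.
Proof.
move=> lb; apply: lb_le_inf => [|_ [k [L [M [LM ->]]]]]; last exact: lb.
by exists (norm_2_inf (1%:M : 'M[R]_m) * norm_1_2 A), m, 1%:M, A; rewrite mul1mx.
Qed.

Lemma gamma2_ge0 m n (A : 'M[R]_(m, n)) : 0 <= gamma2 A.
Proof. by apply: le_gamma2 => k L M _; rewrite mulr_ge0 ?norm_2_inf_ge0 ?norm_1_2_ge0. Qed.

Lemma normr_le_gamma2 m n (A : 'M[R]_(m, n)) i j : `|A i j| <= gamma2 A.
Proof. by apply: le_gamma2 => k L M <-; exact: normr_mulmx_le. Qed.

End Gamma2.

Section Log2.
Variable R : realType.

Lemma log2_exp2 k : log2 (2 ^+ k : R) = k%:R.
Proof. by rewrite /log2 lnXn // -(mulr_natl (ln 2)) mulfK // gt_eqF // ln_gt0 // ltr1n. Qed.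

Lemma ler_log2 (x y : R) : 0 < x -> 0 < y -> (log2 x <= log2 y) = (x <= y).
Proof. by move=> x_gt0 y_gt0; rewrite /log2 ler_pM2r ?invr_gt0 ?ln_gt0 ?ltr1n // ler_ln. Qed.

End Log2.

Lemma exists_le_of_sum_le (R : realDomainType) k (x : 'I_k -> R) c : (0 < k)%N ->
  \sum_(s < k) x s <= k%:R * c -> exists s, x s <= c.
Proof.
move=> k_gt0 sum_le; case: (pselect (exists s, x s <= c)) => // /forallNP all_gt.
have : \sum_(s < k) c < \sum_(s < k) x s.
  apply: ltr_sum => [|s _]; last by rewrite ltNge; apply/negP/all_gt.
  by apply/hasP; exists (Ordinal k_gt0); rewrite ?mem_index_enum.
by rewrite sumr_const card_ord -mulr_natl ltNge sum_le.
Qed.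

Section OnlineFactorization.
Variable R : realType.

Definition vdot N (u v : 'rV[R]_N) : R := \sum_j u ord0 j * v ord0 j.

Lemma vdot_comb_rows N (l : seq R) (Rs : seq 'rV[R]_N) v :
  vdot (comb_rows l Rs) v = \sum_(i < size Rs) l`_i * vdot Rs`_i v.
Proof.
rewrite /comb_rows /vdot; under eq_bigr => j _ do rewrite summxE mulr_suml.
rewrite exchange_big /=; apply: eq_bigr => i _.
by rewrite mulr_sumr; apply: eq_bigr => j _; rewrite mxE mulrA.
Qed.

Lemma norm2_seqE (l : seq R) : norm2_seq l = Num.sqrt (\sum_(i < size l) l`_i ^+ 2).
Proof. by rewrite /norm2_seq (big_nth 0) big_mkord. Qed.

Variables (m N : nat) (Q : 'M[R]_(m.+1, N)) (A : online_alg R N).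

Lemma alg_R_cat t T : (t <= T)%N -> exists rest, alg_R Q A T = alg_R Q A t ++ rest.
Proof.
by move=> le_tT; rewrite /alg_R -(subnKC le_tT) iotaD map_cat flatten_cat catA; eexists.
Qed.

Lemma norm2_alg_l_le_value t : (0 < t)%N -> norm2_seq (alg_l Q A t) <= value_by Q A t.
Proof.
by move=> t_gt0; apply: (le_bigmax_seq _ t) => //; rewrite mem_iota t_gt0 add1n ltnSn.
Qed.

Hypothesis valid : valid_for Q A.

Lemma col_energy_le1 j : \sum_(r <- alg_R Q A m.+1) r ord0 j ^+ 2 <= 1.
Proof.
have := le_trans (le_bigmax _ (fun j => Num.sqrt (\sum_(r <- alg_R Q A m.+1) r ord0 j ^+ 2)) j)
                 (valid.1 _ (leqnn _)).
by move=> norm_le1; rewrite -ler_sqrt // sqrtr1.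
Qed.

Lemma normr_vdot_row_le t (h : 'rV[R]_N) : (0 < t <= m.+1)%N ->
  `|vdot (row (inord t.-1) Q) h|
    <= norm2_seq (alg_l Q A t) * Num.sqrt (\sum_(r <- alg_R Q A m.+1) vdot r h ^+ 2).
Proof.
move=> t_range; have [size_l <-] := valid.2 t t_range.
rewrite vdot_comb_rows; apply: le_trans (normr_sum_mul_le _ _ _) _.
apply: ler_pM; rewrite ?sqrtr_ge0 ?norm2_seqE ?size_l //.
have [rest ->] := alg_R_cat (proj2 (andP t_range)).
rewrite ler_wsqrtr // big_cat /= (big_nth (0 : 'rV[R]_N)) big_mkord lerDl.
by apply: sumr_ge0 => r _; exact: sqr_ge0.
Qed.

End OnlineFactorization.

Definition pow2_floor n := (2 ^ trunc_log 2 n)%N.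

Lemma pow2_floor_gt0 n : (0 < pow2_floor n)%N.
Proof. by rewrite expn_gt0. Qed.

Lemma pow2_floor_le n : (0 < n)%N -> (pow2_floor n <= n)%N.
Proof. exact: trunc_logP. Qed.

Lemma ltn_double_pow2_floor n : (n < (pow2_floor n).*2)%N.
Proof. by rewrite -mul2n -expnS trunc_log_ltn. Qed.

Lemma sum_ord_if_lt (V : nmodType) n k (F : nat -> V) :
  \sum_(i < n) (if (i < k)%N then F i else 0) = \sum_(i < minn n k) F i.
Proof.
case: (leqP n k) => [le_nk|lt_kn].
  by apply: eq_bigr => i _; rewrite (leq_trans (ltn_ord i) le_nk).
by rewrite -big_mkcond (big_ord_widen _ _ (ltnW lt_kn)).
Qed.

Section Powers4.
Variable R : numFieldType.

Lemma sum_exp4 k : \sum_(i < k) (4 : R) ^+ i = (4 ^+ k - 1) / 3.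
Proof. by rewrite subrX1; field. Qed.

Lemma sqr_exp2 k : ((2 : R) ^+ k) ^+ 2 = 4 ^+ k.
Proof. by rewrite exprAC expr2 -natrM. Qed.

End Powers4.

Section ScaledSylvester.
Variable R : realType.

Local Notation K n := (pow2_floor n.+1).

Definition scaled_sylvester n : 'M[R]_n.+1 :=
  \matrix_(i, j) if (i < K n)%N && (j < K n)%N
                 then 2 ^+ i * sylvester R (trunc_log 2 n.+1) i j else 0.

Definition sylvester_row n s : 'rV[R]_n.+1 :=
  \row_j if (j < K n)%N then sylvester R (trunc_log 2 n.+1) s j else 0.

Lemma scaled_sylvester_row0 n : norm_inf_row (row ord0 (scaled_sylvester n)) = 1.
Proof.
have entry0 (j : 'I_n.+1) : row ord0 (scaled_sylvester n) ord0 j = (j < K n)%:R.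
  by rewrite !mxE pow2_floor_gt0 /= expr0 mul1r sylvester0l; case: ifP.
apply/le_anti/andP; split.
  by apply: bigmax_le => // j _; rewrite entry0 normr_nat lern1 leq_b1.
apply: le_trans (le_bigmax _ (fun j => `|row ord0 (scaled_sylvester n) ord0 j|) ord0).
by rewrite entry0 pow2_floor_gt0 normr1.
Qed.

Lemma gamma2_prefix_scaled_sylvester n t : (t <= n.+1)%N ->
  gamma2 (prefix_rows (scaled_sylvester n) t) ^+ 2 <= \sum_(i < minn t (K n)) 4 ^+ i.
Proof.
move=> le_t; have sum_ge0 : 0 <= \sum_(i < minn t (K n)) (4 : R) ^+ i.
  by apply: sumr_ge0 => i _; exact: exprn_ge0.
rewrite -(sqr_sqrtr sum_ge0) ler_sqr ?nnegrE ?gamma2_ge0 ?sqrtr_ge0 //.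
apply: le_trans (gamma2_le_norm_1_2 _) (norm_1_2_le _) => j.
rewrite -(sum_ord_if_lt t (K n) (fun i => 4 ^+ i)); apply: ler_sum => i _.
have lt_i : (i < n.+1)%N := leq_trans (ltn_ord i) le_t.
rewrite !mxE inordK //.
case: ifP => [/andP[-> _]|_]; first by rewrite exprMn sylvester_sqr mulr1 sqr_exp2.
by rewrite expr0n; case: ifP => _; rewrite ?exprn_ge0.
Qed.

Lemma prefix_rows_full m n (Q : 'M[R]_(m.+1, n)) : prefix_rows Q m.+1 = Q.
Proof. by apply/matrixP => i j; rewrite mxE inord_val. Qed.

Lemma exp2_le_gamma2_scaled_sylvester n : 2 ^+ (K n).-1 <= gamma2 (scaled_sylvester n).
Proof.
have lt_K : ((K n).-1 < n.+1)%N by rewrite prednK ?pow2_floor_gt0 ?pow2_floor_le.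
apply: le_trans (normr_le_gamma2 _ (Ordinal lt_K) ord0).
rewrite mxE /= prednK ?pow2_floor_gt0 // leqnn /= sylvester0r mulr1.
by rewrite ger0_norm // exprn_ge0.
Qed.

Lemma gamma2_scaled_sylvester_le_exp2 n : gamma2 (scaled_sylvester n) <= 2 ^+ K n.
Proof.
rewrite -ler_sqr ?nnegrE ?gamma2_ge0 ?exprn_ge0 // sqr_exp2.
have := gamma2_prefix_scaled_sylvester (leqnn n.+1).
rewrite prefix_rows_full (minn_idPr (pow2_floor_le _)) // sum_exp4 => /le_trans; apply.
have := exprn_ge0 (K n) (ler0n R 4); lra.
Qed.

Lemma log2_gamma2_scaled_sylvester n :
  (K n).-1%:R <= log2 (gamma2 (scaled_sylvester n)) <= (K n)%:R.
Proof.
have gamma2_gt0 : 0 < gamma2 (scaled_sylvester n).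
  exact: lt_le_trans (exprn_gt0 _ _) (exp2_le_gamma2_scaled_sylvester n).
rewrite -(log2_exp2 _ (K n).-1) -(log2_exp2 _ (K n)) !ler_log2 ?exprn_gt0 //.
by rewrite exp2_le_gamma2_scaled_sylvester gamma2_scaled_sylvester_le_exp2.
Qed.

Lemma vdot_scaled_sylvester_row n s : (s < K n)%N ->
  vdot (row (inord s) (scaled_sylvester n)) (sylvester_row n s) = 2 ^+ s * (K n)%:R.
Proof.
move=> lt_sK; have lt_sn : (s < n.+1)%N := leq_trans lt_sK (pow2_floor_le (ltn0Sn n)).
rewrite /vdot (eq_bigr (fun j : 'I_n.+1 => if (j < K n)%N then 2 ^+ s else 0)) => [|j _].
  rewrite (sum_ord_if_lt _ _ (fun=> 2 ^+ s)) (minn_idPr (pow2_floor_le _)) //.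
  by rewrite sumr_const card_ord mulr_natr.
rewrite !mxE inordK // lt_sK /=; case: ifP => _; last by rewrite mul0r.
by rewrite -mulrA -expr2 sylvester_sqr mulr1.
Qed.

Lemma sum_sqr_vdot_sylvester_row n (r : 'rV[R]_n.+1) :
  \sum_(s < K n) vdot r (sylvester_row n s) ^+ 2
    = (K n)%:R * \sum_(j < n.+1 | (j < K n)%N) r ord0 j ^+ 2.
Proof.
set H := sylvester R (trunc_log 2 n.+1).
have vdot_r s : vdot r (sylvester_row n s) = \sum_(j < n.+1 | (j < K n)%N) r ord0 j * H s j.
  rewrite /vdot [RHS]big_mkcond; apply: eq_bigr => j _.
  by rewrite mxE; case: ifP; rewrite ?mulr0.
have inner (j : 'I_n.+1) : (j < K n)%N -> forall j' : 'I_n.+1, (j' < K n)%N ->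
    \sum_(s < K n) r ord0 j * H s j * (r ord0 j' * H s j')
      = r ord0 j * r ord0 j' * (if j == j' :> nat then (K n)%:R else 0).
  move=> lt_jK j' lt_j'K; rewrite -(sylvester_orthogonal R lt_jK lt_j'K) big_mkord.
  by rewrite mulr_sumr; apply: eq_bigr => s _; rewrite mulrACA.
under eq_bigr do rewrite vdot_r expr2 big_distrlr /=.
rewrite exchange_big mulr_sumr; apply: eq_bigr => j lt_jK; rewrite exchange_big /=.
rewrite (eq_bigr _ (inner j lt_jK)) (bigD1 j) //= eqxx big1 => [|j' /andP[_ neq_j'j]].
  by rewrite addr0 mulrC expr2.
by rewrite ifN ?mulr0 // eq_sym.
Qed.

Section Online.
Variables (n : nat) (A : online_alg R n.+1).
Hypothesis valid : valid_for (scaled_sylvester n) A.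

Lemma exists_low_energy_sylvester_row : exists s : 'I_(K n),
  \sum_(r <- alg_R (scaled_sylvester n) A n.+1) vdot r (sylvester_row n s) ^+ 2 <= (K n)%:R.
Proof.
apply: exists_le_of_sum_le; first exact: pow2_floor_gt0.
rewrite exchange_big /=; under eq_bigr do rewrite sum_sqr_vdot_sylvester_row.
rewrite -mulr_sumr ler_pM2l ?ltr0n ?pow2_floor_gt0 // exchange_big /=.
apply: le_trans (ler_sum _ (fun j _ => col_energy_le1 valid j)) _.
rewrite big_mkcond (sum_ord_if_lt _ _ (fun=> 1)) (minn_idPr (pow2_floor_le _)) //.
by rewrite sumr_const card_ord.
Qed.

Lemma exp2_sqrt_le_norm2_alg_l (s : 'I_(K n)) :
  \sum_(r <- alg_R (scaled_sylvester n) A n.+1) vdot r (sylvester_row n s) ^+ 2 <= (K n)%:R ->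
  2 ^+ s * Num.sqrt (K n)%:R <= norm2_seq (alg_l (scaled_sylvester n) A s.+1).
Proof.
move=> energy_le; have k_gt0 : 0 < (K n)%:R :> R by rewrite ltr0n pow2_floor_gt0.
have s_range : (0 < s.+1 <= n.+1)%N := leq_trans (ltn_ord s) (pow2_floor_le (ltn0Sn n)).
have sqrt_k_gt0 : 0 < Num.sqrt ((K n)%:R : R) by rewrite sqrtr_gt0.
rewrite -(ler_pM2r sqrt_k_gt0) -mulrA -expr2 (sqr_sqrtr (ltW k_gt0)).
have := normr_vdot_row_le valid (sylvester_row n s) s_range.
rewrite /= vdot_scaled_sylvester_row // ger0_norm; last by rewrite mulr_ge0 ?exprn_ge0.
by move/le_trans; apply; rewrite ler_wpM2l ?sqrtr_ge0 ?ler_wsqrtr.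
Qed.

Lemma scaled_sylvester_online_lower_bound : exists t, (1 <= t <= n.+1)%N /\
  Num.sqrt (log2 (gamma2 (scaled_sylvester n)) / 2)
    * gamma2 (prefix_rows (scaled_sylvester n) t)
  <= value_by (scaled_sylvester n) A t.
Proof.
have [s energy_le] := exists_low_energy_sylvester_row.
have lt_sK : (s < K n)%N := ltn_ord s.
have lt_sn : (s < n.+1)%N := leq_trans lt_sK (pow2_floor_le (ltn0Sn n)).
exists s.+1; split=> //; apply: le_trans (norm2_alg_l_le_value _ _ (ltn0Sn s)).
apply: le_trans (exp2_sqrt_le_norm2_alg_l energy_le).
have [L_ge L_le] := andP (log2_gamma2_scaled_sylvester n).
set L := log2 _ in L_ge L_le *; set k : R := (K n)%:R in L_le *; set G := gamma2 _.
have k_ge0 : 0 <= k := ler0n _ _.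
have L_ge0 : 0 <= L := le_trans (ler0n _ _) L_ge.
have G_le : G ^+ 2 <= (4 * 4 ^+ s - 1) / 3.
  have := gamma2_prefix_scaled_sylvester lt_sn.
  by rewrite (minn_idPl lt_sK) sum_exp4 [4 ^+ _]exprS.
have : L / 2 * G ^+ 2 <= k / 2 * ((4 * 4 ^+ s - 1) / 3).
  by apply: ler_pM; [lra | exact: sqr_ge0 | lra | exact: G_le].
rewrite -ler_sqr ?nnegrE ?mulr_ge0 ?sqrtr_ge0 ?gamma2_ge0 ?exprn_ge0 //.
rewrite !exprMn sqr_exp2 (sqr_sqrtr k_ge0) sqr_sqrtr; last lra.
have := mulr_ge0 k_ge0 (exprn_ge0 s (ler0n R 4)); lra.
Qed.

End Online.

End ScaledSylvester.

Theorem theorem5p1 (R : realType) :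
  exists (c C : R) (n0 : nat), 0 < c /\ 0 < C /\
  exists Q : forall n : nat, 'M[R]_(n.+1),
    (forall n : nat, norm_inf_row (row ord0 (Q n)) = 1) /\
    (forall n : nat, (n0 <= n)%N ->
        c * n.+1%:R <= log2 (gamma2 (Q n)) /\ log2 (gamma2 (Q n)) <= C * n.+1%:R) /\
    (forall (n : nat) (A : online_alg R n.+1), valid_for (Q n) A ->
        exists t : nat, (1 <= t <= n.+1)%N /\
          Num.sqrt (log2 (gamma2 (Q n)) / 2) * gamma2 (prefix_rows (Q n) t)
            <= value_by (Q n) A t).
Proof.
exists (1 / 4), 1, 1%N; split; first lra; split; first lra.
exists (@scaled_sylvester R); split; first exact: scaled_sylvester_row0.
split; last exact: scaled_sylvester_online_lower_bound.
move=> n n_ge1; have [L_ge L_le] := andP (log2_gamma2_scaled_sylvester R n); split.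
- apply: le_trans L_ge; have lt_n := ltn_double_pow2_floor n.+1.
  have : (n.+1 <= 4 * (pow2_floor n.+1).-1)%N by move: lt_n; rewrite -mul2n; lia.
  by rewrite -(ler_nat R) natrM; lra.
- by apply: le_trans L_le _; rewrite mul1r ler_nat pow2_floor_le.
Qed.
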